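(* Let $U$ be an $n$-qubit Clifford circuit, $L$ a finite set of its wires, and $B\in\mathbb{F}_2^{3|L|\times 2n}$ the back-propagator matrix of $L$. Let $S$ be a stabilizer group on $n$ qubits (an abelian group of $n$-qubit Pauli operators not containing $-I$) with generators $g_1,\dots,g_r$; let $T\in\mathbb{F}_2^{r\times 2n}$ be the matrix whose rows are the binary encodings of $g_1,\dots,g_r$, and let $N$ be a matrix whose columns form a basis of $\{v\in\mathbb{F}_2^{2n}: Tv=0\}$. Then the number of assignments $w\mapsto P_w\in\{I,X,Y,Z\}$, $w\in L$, such that $\prod_{w\in L}B(P_w,w)\in\{cs: c\in\{\pm1,\pm i\},\ s\in S\}$ equals $2^{\,2|L|-\operatorname{rk}_{\mathbb{F}_2}(BN)}$.
   Context: An $n$-qubit Clifford circuit $U$ is a finite sequence of Clifford gates on $n$ qubits. Its directed acyclic graph has the gates as vertices, augmented by one dummy input vertex and one dummy output vertex per qubit, and a directed edge for each input/output relation between gates; these edges are called wires. Each wire $w$ carries a definite qubit $q(w)$. For a wire $w$, write $U=B_wA_w$, where $A_w$ is the product of the gates preceding $w$ in a topological ordering of the DAG and $B_w$ the product of the remaining gates. For $P\in\{X,Y,Z\}$, $P_w$ denotes the $n$-qubit Pauli acting as $P$ on qubit $q(w)$ and as identity elsewhere. The back-propagator is the $n$-qubit Pauli operator $B(P,w)=A_w^\dagger P_wA_w$; set $B(I,w)=I$. Each $n$-qubit Pauli operator, up to phase, is encoded as its binary symplectic vector in $\mathbb{F}_2^{2n}$; products of Paulis correspond to sums of encodings. The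 back-propagator matrix of $L$ is the matrix $B\in\mathbb{F}_2^{3|L|\times 2n}$ whose rows are indexed by $(P,w)\in\{X,Y,Z\}\times L$, the $(P,w)$ row being the encoding of $B(P,w)$. *)

From HB Require Import structures.
From mathcomp Require Import all_boot all_order all_algebra.
Set Implicit Arguments.
Unset Strict Implicit.
Unset Printing Implicit Defensive.
Import GRing.Theory.
Local Open Scope ring_scope.

Inductive pl := pI | pX | pY | pZ.

Definition pl_to_ord (p : pl) : 'I_4 :=
  match p with pI => inord 0 | pX => inord 1 | pY => inord 2 | pZ => inord 3 end.
Definition ord_to_pl (i : 'I_4) : pl :=
  match val i with 0 => pI | 1 => pX | 2 => pY | _ => pZ end%N.
Lemma pl_to_ordK : cancel pl_to_ord ord_to_pl.
Proof. by case; rewrite /ord_to_pl /= inordK. Qed.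
HB.instance Definition _ := Finite.copy pl (can_type pl_to_ordK).

(* The n-qubit Pauli group.  An element ((k, x), z) denotes the operator    *)
(*     i^k * X^x Z^z   (tensor product over the n qubits),                  *)
(* with k in Z/4 and x, z in F_2^n.  Its binary symplectic encoding is the  *)
(* row vector [x | z] in F_2^{2n} (here of length n + n).                   *)
(* Multiplication: X^x Z^z X^x' Z^z' = (-1)^(z.x') X^(x+x') Z^(z+z').       *)
Definition Pauli (n : nat) := ('I_4 * 'rV['F_2]_n * 'rV['F_2]_n)%type.

Section Pauli.
Variable n : nat.

Definition pphase (p : Pauli n) : 'I_4 := p.1.1.
Definition px (p : Pauli n) : 'rV['F_2]_n := p.1.2.
Definition pz (p : Pauli n) : 'rV['F_2]_n := p.2.

Definition dotF2 (u v : 'rV['F_2]_n) : 'F_2 := (u *m v^T) 0 0.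

Definition pmul (p q : Pauli n) : Pauli n :=
  (inord ((pphase p + pphase q + (if (val (dotF2 (pz p) (px q)) == 1)%N then 2 else 0))
           %% 4)%N,
   px p + px q, pz p + pz q).

Definition pscalar (k : 'I_4) : Pauli n := (k, 0, 0).
Definition pid : Pauli n := pscalar ord0.

Definition enc (p : Pauli n) : 'rV['F_2]_(n + n) := row_mx (px p) (pz p).

Definition delta (q : 'I_n) : 'rV['F_2]_n := \row_j (j == q)%:R.

(* P_q : the Pauli acting as P on qubit q and as identity elsewhere;
   Y = i X Z. *)
Definition pauli_on (P : pl) (q : 'I_n) : Pauli n :=
  match P with
  | pI => pid
  | pX => (ord0, delta q, 0)
  | pY => (inord 1, delta q, delta q)
  | pZ => (ord0, 0, delta q)
  end.

Definition pprod (s : seq (Pauli n)) : Pauli n := foldr pmul pid s.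

(* group generated by g_1, ..., g_r (the Pauli group is finite, so the
   generated group is the set of finite products of generators) *)
Inductive generated (r : nat) (g : 'I_r -> Pauli n) : Pauli n -> Prop :=
| gen_id : generated g pid
| gen_mul (i : 'I_r) (p : Pauli n) : generated g p -> generated g (pmul (g i) p).

(* Clifford gates, in the Heisenberg picture.  A gate G acting on the qubit *)
(* set gsupp is represented by its conjugation action P |-> G^dagger P G on *)
(* the Pauli group.  Clifford unitaries (up to a global phase) correspond   *)
(* exactly to the automorphisms of the Pauli group fixing the scalars; the  *)
(* gate acts only on gsupp, i.e. fixes every Pauli supported outside gsupp. *)
Record gate := Gate { gsupp : {set 'I_n}; gact : Pauli n -> Pauli n }.

Definition is_clifford_gate (G : gate) : Prop :=
  [/\ bijective (gact G),
      {morph gact G : p q / pmul p q},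
      (forall k, gact G (pscalar k) = pscalar k) &
      (forall p : Pauli n,
          (forall q, q \in gsupp G -> px p 0 q = 0 /\ pz p 0 q = 0) ->
          gact G p = p)].

Definition gate0 : gate := Gate set0 id.

(* A circuit is the sequence of its gates [G_1; ...; G_m], U = G_m ... G_1. *)
Definition circuit := seq gate.

(* Wires.  The wire (q, t) is the edge on qubit q leaving the vertex t of  *)
(* the DAG: the input vertex of qubit q when t = 0, and the gate G_t       *)
(* otherwise (which must act on q).                                        *)
Definition wireT (c : circuit) := ('I_n * 'I_(size c).+1)%type.

Definition is_wire (c : circuit) (w : wireT c) : bool :=
  (val w.2 == 0)%N || (w.1 \in gsupp (nth gate0 c (val w.2).-1)).

(* For the wire w = (q, t), A_w = G_t ... G_1, and the back-propagator is
   A_w^dagger P_w A_w = G_1^dag (... (G_t^dag P_q G_t) ...) G_1. *)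
Definition backprop (c : circuit) (P : pl) (w : wireT c) : Pauli n :=
  foldr (fun G acc => gact G acc) (pauli_on P w.1) (take (val w.2) c).

Definition bp_block (c : circuit) (L : {set wireT c}) (P : pl)
  : 'M['F_2]_(#|L|, n + n) :=
  \matrix_(i < #|L|, j < n + n) enc (backprop P (enum_val i)) 0 j.

Definition bp_matrix (c : circuit) (L : {set wireT c})
  : 'M['F_2]_(#|L| + (#|L| + #|L|), n + n) :=
  col_mx (bp_block L pX) (col_mx (bp_block L pY) (bp_block L pZ)).

End Pauli.

From HB Require Import structures.
From mathcomp Require Import all_boot all_order all_algebra zify.
From mathcomp Require Import mxabelem.
Set Implicit Arguments.
Unset Strict Implicit.
Unset Printing Implicit Defensive.
Import GRing.Theory.
Local Open Scope ring_scope.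

(* The encoding forgets phases and turns products into sums, so the product
   of the back-propagators is c*s with s in S exactly when its encoding lies
   in the row space of T, i.e. is annihilated by N.  As B(Y,w) encodes to
   B(X,w) + B(Z,w), the encoding of the product is linear in the 2|L| bits
   (x_w, z_w) describing the assignment, with matrix [B_X; B_Z].  The
   assignments counted are thus the left kernel of [B_X; B_Z] N, of size
   2^(2|L| - rk), and rk [B_X; B_X + B_Z; B_Z] N = rk [B_X; B_Z] N. *)

Lemma F2_cases (x : 'F_2) : x = 0 \/ x = 1.
Proof. case: x => [[|[|m]]] H; [left|right|]; try exact: val_inj. by []. Qed.

Lemma mxrank_col_mx_sum_mid (F : fieldType) m p (a b : 'M[F]_(m, p)) :
  \rank (col_mx a (col_mx (a + b) b)) = \rank (col_mx a b).
Proof.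
rewrite -!addsmxE; apply/eqP; rewrite eqn_leq; apply/andP; split; apply: mxrankS.
  by rewrite !addsmx_sub addsmxSl /= col_mx_sub addsmxSr andbT addmx_sub_adds.
rewrite addsmx_sub addsmxSl /=; apply: submx_trans (addsmxSr _ _).
by rewrite -addsmxE addsmxSr.
Qed.

Lemma card_left_kernel_F2 m p (K : 'M['F_2]_(m, p)) :
  #|[set a : 'rV_m | a *m K == 0]| = (2 ^ (m - \rank K))%N.
Proof.
have -> : [set a : 'rV_m | a *m K == 0] = rowg (kermx K).
  by apply/setP => a; rewrite !inE; apply/eqP/sub_kermxP.
by rewrite card_rowg mxrank_ker card_Fp.
Qed.

Section PauliEncoding.
Variable n : nat.

Lemma enc_pmul (p q : Pauli n) : enc (pmul p q) = enc p + enc q.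
Proof. by rewrite /enc /pmul /px /pz /= add_row_mx. Qed.

Lemma enc_pscalar k : enc (pscalar n k) = 0.
Proof. by rewrite /enc /= row_mx0. Qed.

Lemma enc_pprod (s : seq (Pauli n)) : enc (pprod s) = \sum_(p <- s) enc p.
Proof.
elim: s => [|p s IH]; first by rewrite big_nil /pprod /= enc_pscalar.
by rewrite big_cons /pprod /= enc_pmul -IH.
Qed.

Lemma enc_eq_phase (p s : Pauli n) :
  enc p = enc s -> exists ph, p = pmul (pscalar n ph) s.
Proof.
case: p => [[a x] z]; case: s => [[b x'] z'] /=.
rewrite /enc /px /pz /= => /eq_row_mx [-> ->].
exists (inord ((a + (4 - b)) %% 4)).
rewrite /pmul /pphase /px /pz /= /dotF2 mul0mx mxE /= !add0r; congr (_, _, _).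
apply: val_inj => /=; rewrite !inordK ?ltn_mod //.
have ha := ltn_ord a; have hb := ltn_ord b.
rewrite addn0 modnDml.
have -> : (a + (4 - b) + b = a + 4)%N by lia.
by rewrite modnDr modn_small.
Qed.

Lemma pauli_onY (q : 'I_n) :
  pauli_on pY q = pmul (pscalar n (inord 1)) (pmul (pauli_on pX q) (pauli_on pZ q)).
Proof.
rewrite /= /pmul /pphase /px /pz /= /dotF2 !mul0mx !mxE /= !add0r !addr0.
by congr (_, _, _); apply: val_inj; rewrite /= !inordK.
Qed.

Section Stabilizer.
Variables (r : nat) (g : 'I_r -> Pauli n) (T : 'M['F_2]_(r, n + n)).
Hypothesis HT : forall i, row i T = enc (g i).

Lemma enc_generated_sub s : generated g s -> (enc s <= T)%MS.
Proof.
elim => [|i p _ IH]; first by rewrite enc_pscalar sub0mx.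
by rewrite enc_pmul addmx_sub // -HT row_sub.
Qed.

Lemma sub_enc_generated u : (u <= T)%MS -> exists2 s, generated g s & enc s = u.
Proof.
case/submxP => a ->; rewrite mulmx_sum_row -big_enum /=.
elim: (enum _) => [|i s [p Hp Hs]].
  by exists (pid n); [constructor | rewrite big_nil enc_pscalar].
rewrite big_cons; case: (F2_cases (a 0 i)) => ->.
  by exists p; rewrite // scale0r add0r.
by exists (pmul (g i) p); [constructor | rewrite enc_pmul scale1r HT Hs].
Qed.

Variables (k : nat) (N : 'M['F_2]_(n + n, k)).
Hypothesis HNspan : forall v : 'cV['F_2]_(n + n),
  T *m v = 0 <-> exists a : 'cV['F_2]_k, v = N *m a.

Lemma mulmx_T_N : T *m N = 0.
Proof.
apply/matrixP => i j.
have : T *m col j N = 0 by apply/HNspan; exists (delta_mx j 0); rewrite colE.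
by rewrite colE mulmxA -colE => /(congr1 (fun M : 'cV_r => M i 0)); rewrite !mxE.
Qed.

Lemma sub_rowT_kerN (u : 'rV_(n + n)) : (u <= T)%MS <-> u *m N = 0.
Proof.
split; first by case/submxP => a ->; rewrite -mulmxA mulmx_T_N mulmx0.
move=> uN0; rewrite submxE; apply/eqP/rowP => j.
have [a Ha] : exists a, col j (cokermx T) = N *m a.
  by apply/HNspan; rewrite colE mulmxA mulmx_coker mul0mx.
have := congr1 (fun M : 'cV_(n + n) => (u *m M) 0 0) Ha.
by rewrite /= colE mulmxA -colE (mulmxA u N a) uN0 mul0mx !mxE.
Qed.

Lemma phase_generated_kerN (p : Pauli n) :
  (exists ph s, generated g s /\ p = pmul (pscalar n ph) s) <-> enc p *m N = 0.
Proof.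
split=> [[ph [s [Hs ->]]]|/sub_rowT_kerN /sub_enc_generated [s Hs Hps]].
  by rewrite enc_pmul enc_pscalar add0r; apply/sub_rowT_kerN/enc_generated_sub.
by have [ph ->] := enc_eq_phase (esym Hps); exists ph, s.
Qed.

End Stabilizer.

Definition conj_gates (gs : seq (gate n)) (p : Pauli n) : Pauli n :=
  foldr (fun G acc => gact G acc) p gs.

Definition clifford_circuit (gs : seq (gate n)) : Prop :=
  forall i, (i < size gs)%N -> is_clifford_gate (nth (gate0 n) gs i).

Lemma clifford_circuit_take (gs : seq (gate n)) t :
  clifford_circuit gs -> clifford_circuit (take t gs).
Proof.
move=> Hcl i; rewrite size_take => Hi.
have [lt_it lt_igs] : (i < t)%N /\ (i < size gs)%N by move: Hi; case: ifP; lia.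
by rewrite nth_take //; apply: Hcl.
Qed.

Lemma conj_gates_clifford (gs : seq (gate n)) : clifford_circuit gs ->
  {morph conj_gates gs : p q / pmul p q} /\
  (forall ph, conj_gates gs (pscalar n ph) = pscalar n ph).
Proof.
elim: gs => [//|G gs IH] Hcl.
have [IHM IHS] : {morph conj_gates gs : p q / pmul p q} /\
    (forall ph, conj_gates gs (pscalar n ph) = pscalar n ph).
  by apply: IH => i; apply: (Hcl i.+1).
have [_ GM GS _] := Hcl 0%N isT.
by split=> [p q|ph] /=; rewrite ?IHM ?IHS ?GM ?GS.
Qed.

Definition xbit (P : pl) : 'F_2 := match P with pX | pY => 1 | _ => 0 end.
Definition zbit (P : pl) : 'F_2 := match P with pZ | pY => 1 | _ => 0 end.

Definition pl_of_bits (x z : 'F_2) : pl :=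
  if x == 0 then (if z == 0 then pI else pZ) else (if z == 0 then pX else pY).

Lemma pl_of_bitsK P : pl_of_bits (xbit P) (zbit P) = P.
Proof. by case: P. Qed.

Lemma xbit_of_bits x z : xbit (pl_of_bits x z) = x.
Proof. by case: (F2_cases x) => ->; case: (F2_cases z) => ->. Qed.

Lemma zbit_of_bits x z : zbit (pl_of_bits x z) = z.
Proof. by case: (F2_cases x) => ->; case: (F2_cases z) => ->. Qed.

Section BackPropagation.
Variable c : circuit n.
Hypothesis c_clifford : clifford_circuit c.

Lemma enc_backprop P (w : wireT c) :
  enc (backprop P w) = xbit P *: enc (backprop pX w) + zbit P *: enc (backprop pZ w).
Proof.
have [conjM conjS] := conj_gates_clifford (clifford_circuit_take (t := val w.2) c_clifford).
rewrite /backprop -!/(conj_gates _ _).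
case: P => /=; rewrite ?scale0r ?scale1r ?addr0 ?add0r //.
  by rewrite conjS enc_pscalar.
rewrite -[(inord 1, _, _)]/(pauli_on pY w.1) pauli_onY.
by rewrite !conjM conjS !enc_pmul enc_pscalar add0r.
Qed.

Variable L : {set wireT c}.

Lemma row_bp_block P i : row i (bp_block L P) = enc (backprop P (enum_val i)).
Proof. by apply/rowP => j; rewrite !mxE. Qed.

Lemma bp_blockY : bp_block L pY = bp_block L pX + bp_block L pZ.
Proof.
apply/row_matrixP => i.
by rewrite linearD /= !row_bp_block enc_backprop /= !scale1r.
Qed.

Definition bp_matrixXZ := col_mx (bp_block L pX) (bp_block L pZ).

Lemma mxrank_bp_matrix_mul m (N : 'M['F_2]_(n + n, m)) :
  \rank (bp_matrix L *m N) = \rank (bp_matrixXZ *m N).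
Proof.
by rewrite /bp_matrix bp_blockY !mul_col_mx mulmxDl mxrank_col_mx_sum_mid.
Qed.

Definition wireL := {w : wireT c | w \in L}.

Definition wire_of_ord (i : 'I_#|L|) : wireL := exist _ (enum_val i) (enum_valP i).
Definition ord_of_wire (w : wireL) : 'I_#|L| := enum_rank_in (valP w) (val w).

Lemma wire_of_ordK : cancel wire_of_ord ord_of_wire.
Proof. by move=> i; apply: enum_valK_in. Qed.

Lemma ord_of_wireK : cancel ord_of_wire wire_of_ord.
Proof. by move=> w; apply: val_inj; rewrite /= enum_rankK_in //; apply: valP. Qed.

Definition assignment_bits (f : {ffun wireL -> pl}) : 'rV['F_2]_(#|L| + #|L|) :=
  row_mx (\row_i xbit (f (wire_of_ord i))) (\row_i zbit (f (wire_of_ord i))).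

Definition bits_assignment (a : 'rV['F_2]_(#|L| + #|L|)) : {ffun wireL -> pl} :=
  [ffun w => pl_of_bits (a 0 (lshift _ (ord_of_wire w))) (a 0 (rshift _ (ord_of_wire w)))].

Lemma assignment_bitsK : cancel assignment_bits bits_assignment.
Proof.
move=> f; apply/ffunP => w; rewrite ffunE !mxE.
by rewrite (unsplitK (inl _)) (unsplitK (inr _)) !mxE ord_of_wireK pl_of_bitsK.
Qed.

Lemma bits_assignmentK : cancel bits_assignment assignment_bits.
Proof.
move=> a; apply/rowP => j; rewrite mxE.
case: splitP => i Hi; rewrite !mxE ffunE wire_of_ordK ?xbit_of_bits ?zbit_of_bits;
  by congr (a 0 _); apply: val_inj.
Qed.

Lemma enc_pprod_backprop (f : {ffun wireL -> pl}) :
  enc (pprod [seq backprop (f w) (val w) | w <- enum {: wireL}])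
  = assignment_bits f *m bp_matrixXZ.
Proof.
rewrite enc_pprod big_map big_enum /= mul_row_col !mulmx_sum_row -big_split /=.
rewrite (reindex wire_of_ord) /=; last first.
  by exists ord_of_wire => x _; rewrite ?wire_of_ordK ?ord_of_wireK.
by apply: eq_bigr => i _; rewrite !mxE !row_bp_block enc_backprop.
Qed.

End BackPropagation.
End PauliEncoding.

Theorem mainTheorem2 (n : nat) (c : circuit n)
  (Hcliff : forall i, (i < size c)%N -> is_clifford_gate (nth (gate0 n) c i))
  (L : {set wireT c}) (HL : forall w, w \in L -> is_wire w)
  (r : nat) (g : 'I_r -> Pauli n)
  (Habel : forall a b, generated g a -> generated g b -> pmul a b = pmul b a)
  (HnotmI : ~ generated g (pscalar n (inord 2)))
  (T : 'M['F_2]_(r, n + n)) (HT : forall i, row i T = enc (g i))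
  (k : nat) (N : 'M['F_2]_(n + n, k))
  (HNspan : forall v : 'cV['F_2]_(n + n),
      T *m v = 0 <-> exists a : 'cV['F_2]_k, v = N *m a)
  (HNfree : forall a : 'cV['F_2]_k, N *m a = 0 -> a = 0)
  (A : {set {ffun {w : wireT c | w \in L} -> pl}})
  (HA : forall f, f \in A <->
      exists (ph : 'I_4) (s : Pauli n), generated g s /\
        pprod [seq backprop (f w) (val w) | w <- enum {: {w : wireT c | w \in L}}]
        = pmul (pscalar n ph) s) :
  #|A| = (2 ^ (2 * #|L| - \rank (bp_matrix L *m N)))%N.
Proof.
have -> : A = @assignment_bits _ _ L @^-1: [set a | a *m (bp_matrixXZ L *m N) == 0].
  apply/setP => f; rewrite !inE mulmxA -(enc_pprod_backprop Hcliff).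
  have kerN := phase_generated_kerN HT HNspan.
  by apply/idP/eqP => [/HA/kerN|/kerN/HA].
rewrite on_card_preimset; last first.
  by exists (@bits_assignment _ _ L) => a _; rewrite ?assignment_bitsK ?bits_assignmentK.
by rewrite card_left_kernel_F2 mxrank_bp_matrix_mul // [(2 * _)%N]mul2n -addnn.
Qed.
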